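(* Let $n$ be a positive integer divisible by $q-1$ with $l(n)\ge3(q-1)$, let $\beta\in\mathcal{M}_2(n)$ be an ordered tuple that is maximal for $|\cdot|_1$ (among all of $\mathcal{M}_2(n)$), and let $e$ be the number of even entries of $\beta$. (i) If $e=q-1$, then $|\beta|_1=|\beta|_2$ and $\beta$ is maximal for $|\cdot|_2$. (ii) If $0\le e<q-1$, let $\mu$ be obtained from $\beta$ by replacing every entry $\beta_j$ with $1\le j\le q-1$ and $\beta_j\le\beta_{q-1}$ by $\beta_{q-1}-1$; then $\mu\in\mathcal{M}_2(n)$ is ordered and maximal for $|\cdot|_2$. (iii) If $q-1<e\le2(q-1)$, let $\mu$ be obtained from $\beta$ by replacing every entry $\beta_j$ with $q\le j\le2(q-1)$ and $\beta_j\le\beta_q$ by $\beta_q-1$; then $\mu\in\mathcal{M}_2(n)$ is ordered and maximal for $|\cdot|_2$.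
   Context: For $n=\sum_in_iq^i$ in base $q$, $l(n)=\sum_in_i$. For $\beta\in\mathbb{N}^{2(q-1)}$, $|\beta|_1=\sum_iq^{\beta_i}$; $\mathcal{M}_2(n)=\{\beta\in\mathbb{N}^{2(q-1)}:|\beta|_1\le n\}$; $\mu$ is maximal for $|\cdot|_1$ if $|\mu|_1\ge|\beta|_1$ for all $\beta\in\mathcal{M}_2(n)$. A tuple $\beta\in\mathbb{N}^{2(q-1)}$ is ordered if there is $e$ with $0\le e\le2(q-1)$ such that $\beta_1\ge\cdots\ge\beta_e$ are all even ($0$ counts as even) and $\beta_{e+1}\le\cdots\le\beta_{2(q-1)}$ are all odd (so $e$ is the number of even entries); for such $\beta$, $|\beta|_2=\sum_{i=1}^{\min\{e,q-1\}}q^{\beta_i}+\sum_{i=\max\{q,e+1\}}^{2(q-1)}q^{\beta_i}$. An ordered $\mu\in\mathcal{M}_2(n)$ is maximal for $|\cdot|_2$ if $|\mu|_2\ge|\gamma|_2$ for every ordered $\gamma\in\mathcal{M}_2(n)$. *)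

(* Tuples in N^{2(q-1)} are represented as seq nat of size
   2(q-1); the paper's 1-based index i corresponds to 0-based position i-1. *)
From mathcomp Require Import all_boot.
Set Implicit Arguments. Unset Strict Implicit. Unset Printing Implicit Defensive.

(* l(n): sum of base-q digits of n (valid for q >= 2: digit i is (n / q^i) mod q,
   and digits at positions > n vanish). *)
Definition digsum (q n : nat) : nat := \sum_(i < n.+1) ((n %/ q ^ i) %% q).

Definition norm1 (q : nat) (b : seq nat) : nat := \sum_(x <- b) q ^ x.

Definition M2 (q n : nat) (b : seq nat) : bool :=
  (size b == (q - 1).*2) && (norm1 q b <= n).

Definition nb_even (b : seq nat) : nat := count (fun x => ~~ odd x) b.

Definition ordered (b : seq nat) : Prop :=
  exists e, [/\ e <= size b,
     all (fun x => ~~ odd x) (take e b), sorted geq (take e b),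
     all odd (drop e b) & sorted leq (drop e b)].

(* |beta|_2 = sum_{i=1}^{min(e,q-1)} q^{beta_i} + sum_{i=max(q,e+1)}^{2(q-1)} q^{beta_i}
   (0-based: positions 0..min(e,q-1)-1 and max(q-1,e)..2(q-1)-1) *)
Definition norm2 (q : nat) (b : seq nat) : nat :=
  let e := nb_even b in
  \sum_(x <- take (minn e (q - 1)) b) q ^ x +
  \sum_(x <- drop (maxn (q - 1) e) b) q ^ x.

Definition maximal1 (q n : nat) (mu : seq nat) : Prop :=
  M2 q n mu /\ forall b, M2 q n b -> norm1 q b <= norm1 q mu.

Definition maximal2 (q n : nat) (mu : seq nat) : Prop :=
  [/\ ordered mu, M2 q n mu &
      forall g, ordered g -> M2 q n g -> norm2 q g <= norm2 q mu].

Definition mu_low (q : nat) (b : seq nat) : seq nat :=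
  let p := nth 0 b (q - 2) in
  [seq (if (j < q - 1) && (nth 0 b j <= p) then p - 1 else nth 0 b j)
  | j <- iota 0 (size b)].

Definition mu_high (q : nat) (b : seq nat) : seq nat :=
  let p := nth 0 b (q - 1) in
  [seq (if (q - 1 <= j) && (nth 0 b j <= p) then p - 1 else nth 0 b j)
  | j <- iota 0 (size b)].

From mathcomp Require Import all_boot zify.
Set Implicit Arguments. Unset Strict Implicit. Unset Printing Implicit Defensive.

(* Write [k = q - 1] and describe a tuple [s] by its
   multiplicities [c_l(s) = count_mem l s], so that [|s|_1 = sum_l c_l(s) q^l];
   comparing two such sums is a lexicographic comparison of the multiplicity
   vectors as soon as the smaller one has entries [< q] (lex_lt, lex_le).
   - Digits: [l(n)] is subadditive and [l(|s|_1) <= size s], which gives the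
     budget inequality [l(n) <= size s + (n - |s|_1)] (digsum_slack).
   - Maximal tuples: using [l(n) >= 3k], no value repeats [q] times in [b], and
     for every entry [p] of [b] the multiplicities above [p] are the base-[q]
     digits of [n] while [c_p(b)] is at most the digit of [p] (maximal1_digits).
   - Dominance: a tuple [K] with the digits of [n] as multiplicities above a
     pivot [p], [k] entries of each parity and no entry below [p - 1] dominates
     in [|.|_1] every tuple below [n] with at most [k] entries of each parity;
     as [|g|_2] is the [|.|_1]-norm of such a part of [g], [K] bounds [|.|_2]
     on the ordered tuples of [M_2(n)].
   - The three cases: in (i) [b] itself is such a [K]; in (ii) and (iii) [mu]
     is one, obtained from [b] by lowering the entries around the pivot
     [p = b_(q-1)], resp. [b_q] (lowering_maximal2); when that pivot is [0] in
     case (iii), the part of [b] counted by [|b|_2] plays the role of [K]. *)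

Lemma count_all_size (P : pred nat) s : all P s -> count P s = size s.
Proof. by rewrite all_count => /eqP. Qed.

Lemma count_none (P : pred nat) s : all (predC P) s -> count P s = 0.
Proof. by move=> sP; apply/eqP; rewrite -leqn0 leqNgt -has_count -all_predC. Qed.

Lemma all_take (P : pred nat) m s : all P s -> all P (take m s).
Proof. by rewrite -[s in all _ s](cat_take_drop m) all_cat => /andP[]. Qed.

Lemma all_drop (P : pred nat) m s : all P s -> all P (drop m s).
Proof. by rewrite -[s in all _ s](cat_take_drop m) all_cat => /andP[]. Qed.

Lemma count_mem_filter (P : pred nat) (l : nat) s :
  count_mem l (filter P s) = if P l then count_mem l s else 0.
Proof.
elim: s => [|x s IH] /=; first by case: (P l).
case: (eqVneq x l) => [->|xl]; case Px: (P _) => /=; rewrite IH ?Px ?eqxx //.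
by case: (P l); rewrite /= ?(negPf xl).
Qed.

Lemma odd_pred p : 0 < p -> odd (p - 1) = ~~ odd p.
Proof. by case: p => //= p _; rewrite subn1 negbK. Qed.

Lemma geq_trans : transitive geq.
Proof. by move=> x y z yx zy; apply: leq_trans zy yx. Qed.

Lemma geq_refl : reflexive geq.
Proof. exact: leqnn. Qed.

Lemma sorted_nseq (r : rel nat) m x : reflexive r -> sorted r (nseq m x).
Proof. by move=> rr; case: m => //= m; elim: m => //= m ->; rewrite rr. Qed.

Lemma sorted_cat_nat (r : rel nat) (s1 s2 : seq nat) : transitive r ->
  sorted r s1 -> sorted r s2 -> all (fun x => all (r x) s2) s1 -> sorted r (s1 ++ s2).
Proof.
move=> tr s1r s2r s12.
by rewrite sorted_pairwise // pairwise_cat -!sorted_pairwise //; apply/and3P.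
Qed.

Lemma sorted_pivot (r : rel nat) (s : seq nat) (i : nat) :
  transitive r -> reflexive r -> sorted r s -> i < size s ->
  all (fun x => r x (nth 0 s i)) (take i.+1 s) /\ all (r (nth 0 s i)) (drop i s).
Proof.
move=> tr rf ss si.
have mono j j' : j <= j' -> j' < size s -> r (nth 0 s j) (nth 0 s j').
  by move=> jj' j's; apply: (sorted_leq_nth tr rf 0 ss) => //; rewrite inE; lia.
split; apply/allP => x /(nthP 0)[j].
  rewrite size_take; case: ifP => ilt jlt <- /=;
    by rewrite nth_take; try apply: mono; lia.
rewrite size_drop nth_drop => jlt <-.
by apply: mono; [exact: leq_addr | rewrite -ltn_subRL].
Qed.

Lemma perm_rev3 (s1 s2 s3 : seq nat) : perm_eq (s1 ++ s2 ++ s3) (s3 ++ s2 ++ s1).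
Proof. by rewrite perm_catC -catA perm_catCA. Qed.

Definition digit (q n l : nat) : nat := n %/ q ^ l %% q.

Definition dsum (q f a : nat) : nat := \sum_(i < f) digit q a i.

Lemma dsum0 q a : dsum q 0 a = 0.
Proof. by rewrite /dsum big_ord0. Qed.

Lemma dsumS q f a : dsum q f.+1 a = a %% q + dsum q f (a %/ q).
Proof.
rewrite /dsum big_ord_recl /digit /= expn0 divn1; congr (_ + _).
by apply: eq_bigr => i _; rewrite /bump /= add1n expnS divnMA.
Qed.

(* Adding a power of [q] increases the digit sum by at most one (carries only
   decrease it). *)
Lemma dsum_add_pow q f a x : 1 < q -> dsum q f (a + q ^ x) <= (dsum q f a).+1.
Proof.
move=> q1; elim: f a x => [|f IH] a x; first by rewrite !dsum0.
rewrite !dsumS; case: x => [|x].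
- rewrite expn0 modnD ?divnD ?(modn_small q1) ?(divn_small q1) ?addn0; try lia.
  case: (leqP q (a %% q + 1)) => carry /=.
  + by have := IH (a %/ q) 0; rewrite expn0 mul1n; lia.
  + by rewrite mul0n subn0 addn0; lia.
- rewrite expnSr [a + _]addnC modnMDl [_ * q + a]addnC divnDMl; last lia.
  by have := IH (a %/ q) x; lia.
Qed.

Lemma dsum_add q f a b : 1 < q -> dsum q f (a + b) <= dsum q f a + dsum q f b.
Proof.
move=> q1; have q0 : 0 < q by lia.
elim: f a b => [|f IH] a b; first by rewrite !dsum0.
rewrite !dsumS modnD // divnD //; set c := (q <= a %% q + b %% q).
have carry : dsum q f (a %/ q + b %/ q + c) <= dsum q f (a %/ q + b %/ q) + c.
  rewrite /c; case: (q <= _); last by rewrite !addn0.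
  by have := dsum_add_pow f (a %/ q + b %/ q) 0 q1; rewrite expn0 /=; lia.
have := IH (a %/ q) (b %/ q); have : c <= c * q by rewrite leq_pmulr.
lia.
Qed.

Lemma dsum_le q f a : 1 < q -> dsum q f a <= a.
Proof.
move=> q1; elim: f a => [|f IH] a; first by rewrite dsum0.
rewrite dsumS; have := IH (a %/ q); have := divn_eq a q.
have : a %/ q <= a %/ q * q by rewrite leq_pmulr; lia.
lia.
Qed.

Lemma digit_lt q n l : 0 < q -> digit q n l <= q - 1.
Proof. by move=> q0; have := ltn_pmod (n %/ q ^ l) q0; rewrite /digit; lia. Qed.

Lemma digit_expansion_mod q a f : 0 < q ->
  \sum_(0 <= l < f) digit q a l * q ^ l = a %% q ^ f.
Proof.
move=> q0; elim: f => [|f IH]; first by rewrite big_geq // expn0 modn1.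
rewrite big_nat_recr //= IH /digit.
set Q := q ^ f; set w := a %/ Q %% q.
have Q0 : 0 < Q by rewrite expn_gt0 q0.
have rQ : a %% Q < Q by rewrite ltn_mod.
have wq : w < q by rewrite ltn_mod.
have Ea : a = a %/ Q %/ q * (q * Q) + (w * Q + a %% Q).
  have E1 := divn_eq a Q; have E2 := divn_eq (a %/ Q) q.
  set u := a %/ Q %/ q; rewrite -/w -/u in E2; nia.
rewrite expnSr -/Q [Q * q]mulnC [in RHS]Ea modnMDl.
rewrite (@modn_small (w * Q + a %% Q)); first lia.
have : w.+1 * Q <= q * Q by rewrite leq_mul2r wq orbT.
by rewrite mulSn; lia.
Qed.

(* Since [n < q ^ n.+1], the digits at positions [<= n] already expand [n]. *)
Lemma digit_expansion q n : 1 < q -> \sum_(0 <= l < n.+1) digit q n l * q ^ l = n.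
Proof.
move=> q1; rewrite digit_expansion_mod ?modn_small //; last lia.
by have := ltn_expl n q1; rewrite expnS; nia.
Qed.

Lemma norm1_nil q : norm1 q [::] = 0.
Proof. by rewrite /norm1 big_nil. Qed.

Lemma norm1_cons q x s : norm1 q (x :: s) = q ^ x + norm1 q s.
Proof. by rewrite /norm1 big_cons. Qed.

Lemma norm1_cat q s t : norm1 q (s ++ t) = norm1 q s + norm1 q t.
Proof. by rewrite /norm1 big_cat. Qed.

Lemma norm1_nseq q m x : norm1 q (nseq m x) = m * q ^ x.
Proof. by elim: m => [|m IH]; rewrite ?norm1_nil //= norm1_cons IH mulSn. Qed.

Lemma dsum_norm1 q f s : 1 < q -> dsum q f (norm1 q s) <= size s.
Proof.
move=> q1; elim: s => [|x s IH].
  by rewrite norm1_nil /dsum big1 // => i _; rewrite /digit div0n mod0n.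
by rewrite norm1_cons addnC /=; have := dsum_add_pow f (norm1 q s) x q1; lia.
Qed.

Lemma digsum_slack q n s : 1 < q -> norm1 q s <= n ->
  digsum q n <= size s + (n - norm1 q s).
Proof.
move=> q1 ns; rewrite [digsum q n](_ : _ = dsum q n.+1 n) //.
have En : n = norm1 q s + (n - norm1 q s) by lia.
have := dsum_add n.+1 (norm1 q s) (n - norm1 q s) q1; rewrite -En.
have := dsum_norm1 n.+1 s q1; have := dsum_le n.+1 (n - norm1 q s) q1.
lia.
Qed.

Lemma sum_by_value N (P : pred nat) (F : nat -> nat) s : all (fun x => x < N) s ->
  \sum_(0 <= l < N | P l) count_mem l s * F l = \sum_(x <- s | P x) F x.
Proof.
elim: s => [|x s IH] /=; first by rewrite big_nil big1.
move=> /andP[xN /IH {}IH]; rewrite big_cons -IH.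
under eq_bigr => l _ do rewrite mulnDl.
rewrite big_split /=.
have -> : \sum_(0 <= l < N | P l) (x == l) * F l = (if P x then F x else 0).
  rewrite big_mkcond (bigD1_seq x) ?mem_iota ?iota_uniq ?subn0 ?xN //= big1.
    by case: (P x); rewrite /= ?eqxx ?addn0 ?mul1n.
  by move=> l /negPf lx; rewrite eq_sym lx mul0n; case: (P l).
by case: (P x).
Qed.

Lemma count_by_value N (P : pred nat) s : all (fun x => x < N) s ->
  \sum_(0 <= l < N | P l) count_mem l s = count P s.
Proof.
move=> sN; rewrite -sum1_count -(sum_by_value P (fun _ => 1) sN).
by apply: eq_bigr => l _; rewrite muln1.
Qed.

Lemma norm1_by_value q N s : all (fun x => x < N) s ->
  norm1 q s = \sum_(0 <= l < N) count_mem l s * q ^ l.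
Proof. by move=> sN; rewrite (sum_by_value predT (fun l => q ^ l) sN). Qed.

Lemma geometric_sum q m : 0 < q -> \sum_(0 <= l < m) (q - 1) * q ^ l + 1 = q ^ m.
Proof.
move=> q0; elim: m => [|m IH]; first by rewrite big_geq.
rewrite big_nat_recr //= -addnA [_ * _ + 1]addnC addnA IH expnS.
have : 0 < q ^ m by rewrite expn_gt0 q0.
by set Q := q ^ m; nia.
Qed.

Lemma lex_lt q N (a b : nat -> nat) l0 : 0 < q -> l0 < N ->
  (forall l, l0 < l < N -> a l = b l) -> b l0 < a l0 ->
  (forall l, l < l0 -> b l <= q - 1) ->
  \sum_(0 <= l < N) b l * q ^ l < \sum_(0 <= l < N) a l * q ^ l.
Proof.
move=> q0 lN ab_top ab_l0 b_low.
rewrite !(big_cat_nat (leq0n l0) (ltnW lN)) /= !(big_ltn lN).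
have -> : \sum_(l0.+1 <= l < N) a l * q ^ l = \sum_(l0.+1 <= l < N) b l * q ^ l.
  by apply: eq_big_nat => l lb; rewrite ab_top.
have low : \sum_(0 <= l < l0) b l * q ^ l <= \sum_(0 <= l < l0) (q - 1) * q ^ l.
  rewrite !big_seq; apply: leq_sum => l; rewrite mem_iota => /andP[_ ll0].
  by rewrite leq_mul2r b_low ?orbT //; lia.
have := geometric_sum l0 q0.
have : q ^ l0 + b l0 * q ^ l0 <= a l0 * q ^ l0 by rewrite -mulSn leq_mul2r ab_l0 orbT.
lia.
Qed.

Lemma weighted_sum_le q N (a b : nat -> nat) : (forall l, l < N -> a l <= b l) ->
  \sum_(0 <= l < N) a l * q ^ l <= \sum_(0 <= l < N) b l * q ^ l.
Proof.
move=> ab; rewrite !big_seq; apply: leq_sum => l; rewrite mem_iota => /andP[_ lN].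
by rewrite leq_mul2r ab ?orbT //; lia.
Qed.

Lemma top_difference (a b : nat -> nat) N : has (fun l => a l != b l) (iota 0 N) ->
  exists l0, [/\ l0 < N, a l0 != b l0 & forall l, l0 < l < N -> a l = b l].
Proof.
move=> /hasP diff.
have ex : exists l, (l < N) && (a l != b l).
  by case: diff => l; rewrite mem_iota => /andP[_ lN] abl; exists l; rewrite abl andbT.
have ub : forall l, (l < N) && (a l != b l) -> l <= N by move=> l /andP[/ltnW].
have [l0 /andP[l0N ab_l0] l0_max] := ex_maxnP ex ub.
exists l0; split=> // l /andP[l0l lN]; apply/eqP/negPn/negP => abl.
by have := l0_max l; rewrite lN abl => /(_ isT); lia.
Qed.

Lemma lex_le q N (a b : nat -> nat) : 0 < q ->
  (forall l0, l0 < N -> (forall l, l0 < l < N -> a l = b l) -> a l0 <= b l0) ->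
  (forall l, l < N -> a l <= q - 1) ->
  \sum_(0 <= l < N) a l * q ^ l <= \sum_(0 <= l < N) b l * q ^ l.
Proof.
move=> q0 ab a_digit.
case: (boolP (has (fun l => a l != b l) (iota 0 N))) => [diff | /hasPn same].
  have [l0 [l0N ab_l0 agree]] := top_difference diff.
  apply/ltnW/(lex_lt q0 l0N) => [l /agree -> //||l ll0]; last by apply: a_digit; lia.
  by rewrite ltn_neqAle ab_l0 ab.
apply/eq_leq/eq_big_nat => l lN.
by have /negPn/eqP -> : ~~ (a l != b l) by apply: same; rewrite mem_iota.
Qed.

(* Since [x < q ^ x], the entries of a tuple with [|s|_1 <= n] are at most [n]. *)
Lemma entry_lt q n s x : 1 < q -> norm1 q s <= n -> x \in s -> x < n.+1.
Proof.
move=> q1 ns; elim: s ns => [|y s IH] //=.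
rewrite norm1_cons in_cons => ns /orP[/eqP->|xs].
  by have := ltn_expl y q1; lia.
by apply: IH xs; lia.
Qed.

Lemma entries_lt q n s : 1 < q -> norm1 q s <= n -> all (fun x => x < n.+1) s.
Proof. by move=> q1 ns; apply/allP => x; apply: entry_lt q1 ns. Qed.

Lemma norm1_filter q (P : pred nat) s :
  norm1 q s = norm1 q (filter P s) + norm1 q (filter (predC P) s).
Proof. by rewrite /norm1 !big_filter [LHS](bigID P). Qed.

Lemma norm1_pred1 q v s : norm1 q (filter (pred1 v) s) = count_mem v s * q ^ v.
Proof.
elim: s => [|x s IH] /=; first by rewrite norm1_nil.
by case: eqP => [->|_] /=; rewrite ?norm1_cons IH ?mulSn.
Qed.

(* A tuple whose entries are below [m] and repeat at most [q - 1] times has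
   norm below [q ^ m]: its multiplicities are genuine base-[q] digits. *)
Lemma norm1_lt_pow q m s : 0 < q -> all (fun x => x < m) s ->
  (forall v, count_mem v s <= q - 1) -> norm1 q s < q ^ m.
Proof.
move=> q0 sm mult; rewrite (norm1_by_value q sm) -(geometric_sum m q0) addn1 ltnS.
by apply: weighted_sum_le => l _; apply: mult.
Qed.

(* In a [|.|_1]-maximal tuple no value repeats [q] times: otherwise trading [q]
   copies of [v] for one copy of [v + 1] and [q - 1] zeros gains [q - 1], and
   [l(n) >= 3(q-1)] guarantees that much room below [n]. *)
Lemma multiplicity_bound q n b : 1 < q -> 3 * (q - 1) <= digsum q n ->
  maximal1 q n b -> forall v : nat, count_mem v b <= q - 1.
Proof.
move=> q1 ds [/andP[/eqP sb nb] bmax] v; rewrite leqNgt; apply/negP => cv.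
set c := count_mem v b in cv; pose r : seq nat := filter (predC (pred1 v)) b.
pose b' := v.+1 :: nseq (q - 1) 0 ++ nseq (c - q) v ++ r.
have sr : size r + c = size b by rewrite size_filter addnC count_predC.
have nb' : norm1 q b' = norm1 q b + (q - 1).
  rewrite /b' norm1_cons !norm1_cat !norm1_nseq (norm1_filter _ (pred1 v) b).
  rewrite norm1_pred1 -/c -/r expn0 muln1 expnS mulnBl.
  have : q * q ^ v <= c * q ^ v by rewrite leq_mul2r; apply/orP; right; lia.
  lia.
have room := digsum_slack q1 nb.
have : M2 q n b'.
  by rewrite /M2 nb' /b' /= !size_cat !size_nseq; apply/andP; split; [apply/eqP|]; lia.
by move/bmax; lia.
Qed.

Lemma top_deficit q n s : 1 < q -> norm1 q s <= n -> size s < digsum q n ->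
  exists l0, [/\ l0 < n.+1, forall l, l0 < l < n.+1 -> count_mem l s = digit q n l
               & count_mem l0 s < digit q n l0].
Proof.
move=> q1 ns small; have q0 : 0 < q by lia.
have sN := entries_lt q1 ns.
have [diff|/hasPn same] :=
  boolP (has (fun l => count_mem l s != digit q n l) (iota 0 n.+1)).
  have [l0 [l0N ne agree]] := top_difference diff.
  exists l0; split=> //; rewrite ltn_neqAle ne leqNgt /=; apply/negP => excess.
  have := lex_lt q0 l0N agree excess.
  rewrite digit_expansion // -norm1_by_value //.
  by move=> /(_ (fun l _ => digit_lt n l q0)); lia.
suff : size s = digsum q n by lia.
have -> : digsum q n = \sum_(0 <= l < n.+1) digit q n l by rewrite big_mkord.
rewrite -(count_predT s) -(count_by_value predT sN).
rewrite big_nat_cond [RHS]big_nat_cond; apply: eq_bigr => l /andP[/andP[_ lN] _].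
by apply/eqP/negPn/same; rewrite mem_iota lN.
Qed.

(* In a maximal tuple every entry lies at or above a deficit position [l0] of
   the kind given by [top_deficit]: the entries below [l0] weigh less than
   [q ^ l0] (their multiplicities are digits), so replacing them by one copy of
   [l0] and zeros would increase the norm while staying in [M_2(n)]. *)
Lemma entries_above_deficit q n b l0 : 1 < q -> 3 * (q - 1) <= digsum q n ->
  maximal1 q n b -> l0 < n.+1 ->
  (forall l, l0 < l < n.+1 -> count_mem l b = digit q n l) ->
  count_mem l0 b < digit q n l0 -> all (fun x => l0 <= x) b.
Proof.
move=> q1 ds bmax l0N agree deficit; have q0 : 0 < q by lia.
have [/andP[/eqP sb nb] bmax'] := bmax.
apply/allP => x xb; rewrite leqNgt; apply/negP => xl0.
pose P := fun y => l0 <= y.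
pose F : seq nat := filter P b; pose L : seq nat := filter (predC P) b.
have sizes : size F + size L = size b by rewrite !size_filter count_predC.
have L0 : 0 < size L.
  by rewrite size_filter -has_count; apply/hasP; exists x => //=; rewrite /P -ltnNge.
have light : norm1 q L < q ^ l0.
  apply: norm1_lt_pow => // [|v].
    by apply/allP => y; rewrite mem_filter /= /P -ltnNge => /andP[].
  rewrite /L count_mem_filter; case: ifP => // _.
  exact: multiplicity_bound q1 ds bmax v.
have n_top : norm1 q (l0 :: F) <= n.
  have top_lt : all (fun y => y < n.+1) (l0 :: F).
    rewrite /= l0N; apply/allP => y.
    by rewrite mem_filter => /andP[_ /(entry_lt q1 nb)].
  rewrite (norm1_by_value q top_lt) -[X in _ <= X](digit_expansion n q1).
  apply: weighted_sum_le => l lN /=; rewrite count_mem_filter /P.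
  case: (ltngtP l0 l) => [lt|gt|<-]; rewrite ?eqxx //=; first by rewrite agree ?lt.
have room := digsum_slack q1 n_top.
pose b2 := l0 :: nseq (size L - 1) 0 ++ F.
have : M2 q n b2.
  rewrite /M2 /b2 /= size_cat size_nseq !norm1_cons norm1_cat norm1_nseq expn0 muln1.
  by rewrite norm1_cons /= in room n_top; apply/andP; split; [apply/eqP|]; lia.
move/bmax'; rewrite (norm1_filter q P b) -/F -/L /b2 norm1_cons norm1_cat; lia.
Qed.

Lemma maximal1_digits q n b p : 1 < q -> 3 * (q - 1) <= digsum q n ->
  maximal1 q n b -> p \in b ->
  (forall l, p < l -> l < n.+1 -> count_mem l b = digit q n l) /\
  count_mem p b <= digit q n p.
Proof.
move=> q1 ds bmax pb; have [/andP[/eqP sb nb] _] := bmax.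
have [|l0 [l0N agree deficit]] := top_deficit q1 nb; first by rewrite sb; lia.
have /allP/(_ p pb) l0p := entries_above_deficit q1 ds bmax l0N agree deficit.
split=> [l pl lN|]; first by apply: agree; rewrite lN; lia.
case: (ltngtP l0 p) l0p => // [lt|<-] _; last exact: ltnW.
by rewrite agree // lt (entry_lt q1 nb pb).
Qed.

Lemma ordered_split g : ordered g ->
  [/\ nb_even g <= size g, all (fun x => ~~ odd x) (take (nb_even g) g),
      sorted geq (take (nb_even g) g), all odd (drop (nb_even g) g) &
      sorted leq (drop (nb_even g) g)].
Proof.
case=> e [eg ev ev_sorted od od_sorted]; suff -> : nb_even g = e by [].
rewrite /nb_even -(cat_take_drop e g) count_cat count_all_size // count_none.
  by rewrite size_takel // addn0.
by apply: sub_all od => x /= ->.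
Qed.

Lemma ordered_cat (s1 s2 : seq nat) : all (fun x => ~~ odd x) s1 -> sorted geq s1 ->
  all odd s2 -> sorted leq s2 -> ordered (s1 ++ s2).
Proof.
move=> ev ev_s od od_s; exists (size s1).
by rewrite size_cat leq_addr take_size_cat ?drop_size_cat.
Qed.

Definition norm2_part (q : nat) (g : seq nat) : seq nat :=
  take (minn (nb_even g) (q - 1)) g ++ drop (maxn (q - 1) (nb_even g)) g.

Lemma norm2E q g : norm2 q g = norm1 q (norm2_part q g).
Proof. by rewrite norm1_cat. Qed.

Lemma norm2_balanced q g : nb_even g = q - 1 -> norm2 q g = norm1 q g.
Proof. by move=> E; rewrite norm2E /norm2_part E minnn maxnn cat_take_drop. Qed.

Lemma norm2_part_spec q g : ordered g -> size g = (q - 1).*2 ->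
  [/\ count (fun x => ~~ odd x) (norm2_part q g) <= q - 1,
      count odd (norm2_part q g) <= q - 1,
      norm1 q (norm2_part q g) <= norm1 q g &
      {subset norm2_part q g <= g}].
Proof.
move=> /ordered_split[eg ev _ od _] sg; rewrite /norm2_part.
set e := nb_even g in eg ev od *; set k := q - 1 in sg *.
have Etake : take (minn e k) g = take (minn e k) (take e g).
  by rewrite take_takel // geq_minl.
have Edrop : drop (maxn k e) g = drop (maxn k e - e) (drop e g).
  by rewrite drop_drop subnK // leq_maxr.
have ev' := all_take (minn e k) ev; have od' := all_drop (maxn k e - e) od.
split.
- rewrite count_cat Etake Edrop [count _ (drop _ _)]count_none; last first.
    by apply: sub_all od' => x /= ->.
  by rewrite addn0 count_all_size // size_take size_takel //; case: ifP; lia.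
- rewrite count_cat Etake Edrop (count_none (P := odd)) ?count_all_size //.
  by rewrite add0n -Edrop size_drop sg; lia.
- have -> : norm1 q g = norm1 q (take (minn e k) g) + norm1 q (drop (minn e k) g).
    by rewrite -norm1_cat cat_take_drop.
  rewrite norm1_cat leq_add2l -(subnK (_ : minn e k <= maxn k e)); last lia.
  rewrite -drop_drop.
  set D := drop (minn e k) g; set j := maxn k e - minn e k.
  by have := norm1_cat q (take j D) (drop j D); rewrite cat_take_drop; lia.
- by move=> x; rewrite mem_cat => /orP[/mem_take|/mem_drop].
Qed.

Lemma count_mem_le_parity (l : nat) s :
  count_mem l s <= count (fun x => odd x == odd l) s.
Proof. by apply: sub_count => x /eqP ->. Qed.

Lemma count_at_le N m (Q : pred nat) (X K : seq nat) : Q m ->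
  all (fun x => x < N) X -> all (fun x => x < N) K ->
  (forall l, m < l -> l < N -> count_mem l X = count_mem l K) ->
  count (fun x => (m <= x) && Q x) X <= count (fun x => (m <= x) && Q x) K ->
  count_mem m X <= count_mem m K.
Proof.
move=> Qm XN KN agree.
have split_at s : count (fun x => (m <= x) && Q x) s =
    count_mem m s + count (fun x => (m < x) && Q x) s.
  rewrite -count_predUI [X in _ + X](count_none (P := predI _ _)) ?addn0.
    by apply: eq_count => x /=; case: (ltngtP m x) => [mx|xm|<-] //=; rewrite Qm.
  by apply/allP => x _ /=; case: eqP => [<-|]; rewrite ?ltnn ?andbF.
have above : count (fun x => (m < x) && Q x) X = count (fun x => (m < x) && Q x) K.
  rewrite -(count_by_value _ XN) -(count_by_value _ KN) big_nat_cond [RHS]big_nat_cond.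
  by apply: eq_bigr => l /andP[/andP[_ lN] /andP[ml _]]; apply: agree.
by rewrite !split_at above leq_add2r.
Qed.

Section Dominance.

Variables (q n p : nat) (K : seq nat).
Hypothesis q_gt1 : 1 < q.
Hypothesis K_lt : all (fun x => x < n.+1) K.
Hypothesis K_top : forall l, p < l -> l < n.+1 -> count_mem l K = digit q n l.
Hypothesis K_same : count (fun x => odd x == odd p) K = q - 1.
Hypothesis K_other : 0 < p -> count (fun x => odd x != odd p) K = q - 1.
Hypothesis K_low : all (fun x => p - 1 <= x) K.

(* Since no entry lies below [p - 1], the entries of the parity of [p] lie at or
   above [p], and those of the other parity at or above [p - 1]. *)
Lemma K_same_above : count (fun x => (p <= x) && (odd x == odd p)) K = q - 1.
Proof.
rewrite -K_same; apply/eq_in_count => x /(allP K_low) px /=.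
case: (ltngtP p x) => // xp; have -> : x = p - 1 by lia.
by rewrite odd_pred ?(leq_ltn_trans (leq0n x) xp) //; case: (odd p).
Qed.

Lemma K_other_above : 0 < p ->
  count (fun x => (p - 1 <= x) && (odd x != odd p)) K = q - 1.
Proof.
by move=> p0; rewrite -(K_other p0); apply/eq_in_count => x /(allP K_low) /= ->.
Qed.

Lemma K_digit l : l < p -> count_mem l K <= q - 1.
Proof.
move=> lp; apply: leq_trans (count_mem_le_parity l K) _.
case: (eqVneq (odd l) (odd p)) => [->|ne]; first by rewrite K_same.
by rewrite -(K_other (leq_ltn_trans (leq0n l) lp)); apply: sub_count => x /eqP ->.
Qed.

(* The dominance inequality, by lexicographic comparison of multiplicities: at
   the topmost position [l] where [X] and [K] differ, [l > p] is impossible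
   since [|X|_1 <= n], while for [l = p], [l = p - 1] and [l < p - 1] the parity
   counts (resp. the size) of [X] are bounded by those of [K]. *)
Lemma K_dominates X : all (fun x => x < n.+1) X ->
  count (fun x => ~~ odd x) X <= q - 1 -> count odd X <= q - 1 ->
  norm1 q X <= n -> norm1 q X <= norm1 q K.
Proof.
move=> X_lt X_even X_odd nX; have q0 : 0 < q by lia.
have X_parity (b : bool) : count (fun x => odd x == b) X <= q - 1.
  by case: b; [apply: leq_trans _ X_odd | apply: leq_trans _ X_even];
    apply: sub_count => x /=; case: (odd x).
rewrite (norm1_by_value q X_lt) (norm1_by_value q K_lt).
apply: lex_le => // [l lN agree|l _]; last first.
  exact: leq_trans (count_mem_le_parity l X) (X_parity (odd l)).
have agree' l' : l < l' -> l' < n.+1 -> count_mem l' X = count_mem l' K.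
  by move=> ll' l'N; apply: agree; rewrite ll'.
case: (ltngtP p l) => [pl|lp|pl]; last rewrite -pl in agree' *.
- rewrite K_top // leqNgt; apply/negP => excess.
  have above l' : l < l' < n.+1 -> count_mem l' X = digit q n l'.
    by move=> /andP[ll' l'N]; rewrite agree' // K_top //; lia.
  have := lex_lt q0 lN above excess (fun l' _ => digit_lt n l' q0).
  by rewrite digit_expansion // -norm1_by_value //; lia.
- have p0 : 0 < p by lia.
  case: (ltngtP l (p - 1)) => [far|?|eq_l]; [|lia|].
    apply: (count_at_le (Q := xpredT) isT X_lt K_lt agree').
    have -> : count (fun x => (l <= x) && xpredT x) K = (q - 1).*2.
      rewrite -addnn -{1}K_same -(K_other p0) count_predC count_all_size //.
      by apply: sub_all K_low => x /= px; rewrite andbT; lia.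
    have := count_predC odd X; have := count_size (fun x => (l <= x) && xpredT x) X.
    by have -> : count (predC odd) X = count (fun x => ~~ odd x) X by []; lia.
  rewrite eq_l in agree' *.
  have other : odd (p - 1) != odd p by rewrite odd_pred //; case: (odd p).
  apply: (count_at_le (Q := fun x => odd x != odd p) other X_lt K_lt agree').
  rewrite K_other_above //; apply: leq_trans (X_parity (~~ odd p)).
  by apply: sub_count => x /andP[_]; case: (odd x); case: (odd p).
- apply: (count_at_le (Q := fun x => odd x == odd p) (eqxx (odd p)) X_lt K_lt agree').
  rewrite K_same_above.
  by apply: leq_trans (X_parity (odd p)); apply: sub_count => x /andP[].
Qed.

Lemma K_dominates_norm2 g : ordered g -> M2 q n g -> norm2 q g <= norm1 q K.
Proof.
move=> og /andP[/eqP sg ng]; have [ev od part_le part_sub] := norm2_part_spec og sg.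
rewrite norm2E; apply: K_dominates => //; last exact: leq_trans part_le ng.
by apply/allP => x /part_sub /(entry_lt q_gt1 ng).
Qed.

Lemma K_le_n : p < n.+1 -> count_mem p K < digit q n p -> norm1 q K <= n.
Proof.
move=> pN deficit; have q0 : 0 < q by lia.
rewrite (norm1_by_value q K_lt) -[X in _ <= X](digit_expansion n q_gt1).
apply/ltnW/(lex_lt q0 pN) => // [l /andP[pl lN]|]; [by rewrite K_top | exact: K_digit].
Qed.

End Dominance.

Lemma balanced_parity q s c : count (fun x => odd x == c) s = q - 1 ->
  count (fun x => odd x != c) s = q - 1 ->
  size s = (q - 1).*2 /\ nb_even s = q - 1.
Proof.
move=> same other; split; first by rewrite -addnn -{1}same -other count_predC.
rewrite /nb_even; case: c same other => [_ <-|<- _].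
  by apply: eq_count => x /=; case: (odd x).
by apply: eq_count => x /=; case: (odd x).
Qed.

(* A tuple [mu] with [q - 1] entries of each parity, obtained from a
   [|.|_1]-maximal [b] by lowering some entries to at least [p - 1], keeping
   all multiplicities above an entry [p] of [b] but losing a copy of [p],
   is maximal for [|.|_2]: it is a reference tuple of the [Dominance] section. *)
Lemma lowered_maximal2 (q n : nat) (b mu : seq nat) (p : nat) :
  1 < q -> 3 * (q - 1) <= digsum q n -> maximal1 q n b -> p \in b -> ordered mu ->
  count (fun x => odd x == odd p) mu = q - 1 ->
  count (fun x => odd x != odd p) mu = q - 1 ->
  all (fun x => p - 1 <= x) mu ->
  (forall l, p < l -> count_mem l mu = count_mem l b) ->
  count_mem p mu < count_mem p b -> maximal2 q n mu.
Proof.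
move=> q1 ds bmax pb omu same other mu_ge mu_top mu_p.
have [smu emu] := balanced_parity same other.
have [/andP[_ nb] _] := bmax.
have [b_top b_p] := maximal1_digits q1 ds bmax pb.
have pN := entry_lt q1 nb pb.
have mu_lt : all (fun x => x < n.+1) mu.
  apply/allP => x xmu; case: (leqP x p) => [xp|px]; first lia.
  have : x \in b by rewrite -has_pred1 has_count -mu_top // -has_count has_pred1.
  exact: entry_lt q1 nb.
have K_top l : p < l -> l < n.+1 -> count_mem l mu = digit q n l.
  by move=> pl lN; rewrite mu_top // b_top.
have K_other : 0 < p -> count (fun x => odd x != odd p) mu = q - 1 by [].
have nmu := K_le_n q1 mu_lt K_top same K_other mu_ge pN (leq_trans mu_p b_p).
split=> //; first by rewrite /M2 smu eqxx.
move=> g og Mg; rewrite (norm2_balanced emu).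
exact: (K_dominates_norm2 q1 mu_lt K_top same K_other mu_ge og Mg).
Qed.

(* [clamp p] lowers every value [<= p] to [p - 1]: this is the modification
   performed by [mu_low] and [mu_high] on one half of the tuple. *)
Definition clamp (p x : nat) : nat := if x <= p then p - 1 else x.

Lemma clamp_ge p x : p - 1 <= clamp p x.
Proof. by rewrite /clamp; case: ifP => //; lia. Qed.

Lemma clamp_mono p : {homo clamp p : x y / x <= y}.
Proof. by move=> x y xy; rewrite /clamp; do 2 case: ifP; lia. Qed.

Lemma clamp_parity p x : 0 < p -> odd x != odd p -> odd (clamp p x) != odd p.
Proof.
by move=> p0; rewrite /clamp; case: ifP => // _ _; rewrite odd_pred //; case: (odd p).
Qed.

Lemma clamp_parity_all p s : 0 < p -> all (fun x => odd x != odd p) s ->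
  all (fun x => odd x != odd p) (map (clamp p) s).
Proof. by move=> p0; rewrite all_map; apply: sub_all => x /= /(clamp_parity p0). Qed.

Lemma count_clamp_above p l s : p < l -> count_mem l (map (clamp p) s) = count_mem l s.
Proof.
move=> pl; rewrite count_map; apply: eq_count => x /=; rewrite /clamp.
by case: ifP => // xp; apply/eqP/eqP; lia.
Qed.

Lemma count_clamp_pivot p s : 0 < p -> count_mem p (map (clamp p) s) = 0.
Proof.
move=> p0; rewrite count_map count_none //; apply/allP => x _ /=; rewrite /clamp.
by case: ifP => xp; apply/eqP; lia.
Qed.

Lemma map_clamp_low p s :
  all (fun x => x <= p) s -> map (clamp p) s = nseq (size s) (p - 1).
Proof. by elim: s => //= x s IH /andP[xp /IH ->]; rewrite /clamp xp. Qed.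

Lemma map_clamp0 s : map (clamp 0) s = s.
Proof.
by rewrite (eq_map (g := id)) ?map_id // => x; rewrite /clamp leqn0; case: eqP.
Qed.

Lemma mu_lowE q b : q - 1 <= size b ->
  mu_low q b = map (clamp (nth 0 b (q - 2))) (take (q - 1) b) ++ drop (q - 1) b.
Proof.
move=> kb; rewrite /mu_low -(subnKC kb) iotaD map_cat add0n; congr (_ ++ _).
  rewrite -(map_nth_iota0 0) // -map_comp; apply/eq_in_map => j.
  by rewrite mem_iota => /andP[_ /= ->].
rewrite -[RHS]take_size -(map_nth_iota 0) ?size_drop //; apply/eq_in_map => j.
by rewrite mem_iota => /andP[kj _]; rewrite ltnNge kj.
Qed.

Lemma mu_highE q b : q - 1 <= size b ->
  mu_high q b = take (q - 1) b ++ map (clamp (nth 0 b (q - 1))) (drop (q - 1) b).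
Proof.
move=> kb; rewrite /mu_high -(subnKC kb) iotaD map_cat add0n; congr (_ ++ _).
  rewrite -(map_nth_iota0 0) //; apply/eq_in_map => j.
  by rewrite mem_iota ltnNge => /andP[_ /negPf ->].
rewrite -[drop _ _]take_size -(map_nth_iota 0) ?size_drop // -map_comp.
by apply/eq_in_map => j; rewrite mem_iota => /andP[-> _].
Qed.

Lemma lowering_profile p (X T Y b mu : seq nat) : 0 < p ->
  perm_eq b (X ++ T ++ Y) ->
  perm_eq mu (map (clamp p) X ++ nseq (size T) (p - 1) ++ Y) ->
  p \in T -> all (fun x => x <= p) T ->
  all (fun x => odd x != odd p) X -> all (fun y => (p <= y) && (odd y == odd p)) Y ->
  [/\ forall l, p < l -> count_mem l mu = count_mem l b,
      count_mem p mu < count_mem p b,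
      all (fun x => p - 1 <= x) mu,
      count (fun x => odd x == odd p) mu = size Y &
      count (fun x => odd x != odd p) mu = size X + size T].
Proof.
move=> p0 /permP b_perm mu_perm pT T_le X_par Y_ge.
have flip : (odd (p - 1) == odd p) = false by rewrite odd_pred //; case: (odd p).
have T_pred1 l : p < l -> count_mem l T = 0.
  by move=> pl; apply: count_none; apply: sub_all T_le => x /= xp; apply/eqP; lia.
rewrite (perm_all _ mu_perm); move/permP: mu_perm => mu_perm.
split=> [l pl||||]; rewrite ?mu_perm ?b_perm ?count_cat ?count_nseq.
- rewrite count_clamp_above // T_pred1 //= (_ : (p - 1 == l) = false) //.
  by apply/eqP; lia.
- rewrite count_clamp_pivot // (_ : pred1 p (p - 1) = false) /= ?mul0n.
    2: by apply/eqP; lia.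
  rewrite !add0n addnA -[X in X < _]add0n ltn_add2r ltn_addl //.
  by rewrite -has_count has_pred1.
- rewrite !all_cat all_nseq; apply/and3P; split; last first.
  + by apply: sub_all Y_ge => y /andP[py _]; lia.
  + by rewrite /= leqnn orbT.
  + by apply/allP => _ /mapP[x _ ->]; apply: clamp_ge.
- rewrite count_map count_none ?flip ?mul0n.
    by rewrite count_all_size //; apply: sub_all Y_ge => y /andP[].
  by apply: sub_all X_par => x /=; move/(clamp_parity p0).
- rewrite count_map (@count_none _ Y); last first.
    by apply: sub_all Y_ge => y /andP[_ /eqP yp] /=; rewrite yp eqxx.
  rewrite flip mul1n count_all_size ?addn0 //.
  by apply: sub_all X_par => x /=; apply: clamp_parity.
Qed.

Lemma lowering_maximal2 q n p (b mu X T Y : seq nat) :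
  1 < q -> 3 * (q - 1) <= digsum q n -> maximal1 q n b -> 0 < p ->
  perm_eq b (X ++ T ++ Y) ->
  perm_eq mu (map (clamp p) X ++ nseq (size T) (p - 1) ++ Y) ->
  p \in T -> all (fun x => x <= p) T ->
  all (fun x => odd x != odd p) X -> all (fun y => (p <= y) && (odd y == odd p)) Y ->
  size X + size T = q - 1 -> size Y = q - 1 -> ordered mu -> maximal2 q n mu.
Proof.
move=> q1 ds bmax p0 bXTY muXTY pT T_le X_par Y_ge sXT sY omu.
have [top p_lost mu_ge same other] := lowering_profile p0 bXTY muXTY pT T_le X_par Y_ge.
have pb : p \in b by rewrite (perm_mem bXTY) !mem_cat pT orbT.
by apply: (lowered_maximal2 q1 ds bmax pb omu) => //; rewrite ?same ?other.
Qed.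

(* Case (i): for a balanced ordered tuple [|.|_2 = |.|_1], and [|.|_2 <= |.|_1]
   for every ordered tuple, so [|.|_1]-maximality transfers to [|.|_2]. *)
Lemma case_balanced q n b : maximal1 q n b -> ordered b -> nb_even b = q - 1 ->
  norm1 q b = norm2 q b /\ maximal2 q n b.
Proof.
move=> [Mb bmax] ob eb; rewrite norm2_balanced //; split=> //; split=> // g og Mg.
have /andP[/eqP sg _] := Mg; have [_ _ part_le _] := norm2_part_spec og sg.
by rewrite norm2E (norm2_balanced eb); apply: leq_trans part_le (bmax _ Mg).
Qed.

(* Case (ii), fewer than [q - 1] even entries: [b = E ++ T ++ D] with [E] the
   even entries, [T] the odd entries up to the pivot [p = b_(q-1)] and [D] the
   [q - 1] remaining odd entries; [mu_low] clamps [E] and lowers [T] to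
   [p - 1], which is even. *)
Lemma case_low q n b : 1 < q -> 3 * (q - 1) <= digsum q n ->
  maximal1 q n b -> ordered b -> nb_even b < q - 1 -> maximal2 q n (mu_low q b).
Proof.
move=> q1 ds bmax ob ek; have [/andP[/eqP sb _] _] := bmax.
have [eb ev ev_sorted od od_sorted] := ordered_split ob.
set e := nb_even b in eb ek ev ev_sorted od od_sorted.
set E := take e b in ev ev_sorted; set O := drop e b in od od_sorted.
set i := q - 2 - e.
have iO : i < size O by rewrite size_drop sb; lia.
set p := nth 0 b (q - 2).
have pO : p = nth 0 O i by rewrite nth_drop; congr nth; lia.
have [T_le D_ge] := sorted_pivot leq_trans leqnn od_sorted iO; rewrite -pO in T_le D_ge.
set T := take i.+1 O in T_le; set D := drop i.+1 O.
have sET : size E + size T = q - 1 by rewrite !size_takel //; lia.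
have sD : size D = q - 1 by rewrite !size_drop sb; lia.
have bE : b = (E ++ T) ++ D by rewrite -catA cat_take_drop cat_take_drop.
have takek : take (q - 1) b = E ++ T by rewrite bE take_size_cat // size_cat.
have dropk : drop (q - 1) b = D by rewrite bE drop_size_cat // size_cat.
have pT : p \in T by rewrite pO -(nth_take 0 (ltnSn i)) mem_nth // size_takel.
have p_odd : odd p by apply: (allP od); apply: mem_take pT.
have p0 : 0 < p by case: (p) p_odd.
have E_par : all (fun x => odd x != odd p) E.
  by apply: sub_all ev => x /negPf ->; rewrite p_odd.
have D_par : all (fun y => (p <= y) && (odd y == odd p)) D.
  apply/allP => y yD; rewrite p_odd (allP (all_drop _ od) y yD) andbT.
  by apply: (allP (all_drop 1 D_ge)); rewrite drop_drop add1n; exact: yD.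
rewrite mu_lowE; last by rewrite sb -addnn leq_addr.
rewrite -/p takek dropk map_cat (map_clamp_low T_le) -catA.
apply: (lowering_maximal2 q1 ds bmax p0 _ (perm_refl _) pT T_le) => //.
  by rewrite catA -bE.
rewrite catA; apply: ordered_cat => //.
- rewrite all_cat all_nseq odd_pred // p_odd orbT andbT.
  by apply: sub_all (clamp_parity_all p0 E_par) => x; rewrite p_odd; case: (odd x).
- apply: sorted_cat_nat geq_trans _ (sorted_nseq _ _ geq_refl) _.
    exact: homo_sorted (fun x y => @clamp_mono p y x) _ ev_sorted.
  by apply/allP => _ /mapP[x _ ->]; apply/allP => y /nseqP[-> _]; apply: clamp_ge.
- by apply: sub_all D_par => y /andP[_]; rewrite p_odd => /eqP.
- exact: drop_sorted _ od_sorted.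
Qed.

(* Case (iii), more than [q - 1] even entries and pivot [p = b_q > 0]:
   [b = A ++ M ++ O] with [A] the [q - 1] largest even entries, [M] the other
   even entries (all [<= p], among them [p]) and [O] the odd entries;
   [mu_high] lowers [M] to [p - 1], which is odd, and clamps [O]. *)
Lemma case_high q n b : 1 < q -> 3 * (q - 1) <= digsum q n ->
  maximal1 q n b -> ordered b -> q - 1 < nb_even b -> 0 < nth 0 b (q - 1) ->
  maximal2 q n (mu_high q b).
Proof.
move=> q1 ds bmax ob ek p0; have [/andP[/eqP sb _] _] := bmax.
have [eb ev ev_sorted od od_sorted] := ordered_split ob.
set e := nb_even b in eb ek ev ev_sorted od od_sorted.
set E := take e b in ev ev_sorted; set O := drop e b in od od_sorted.
have kE : q - 1 < size E by rewrite size_takel.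
set p := nth 0 b (q - 1) in p0 *.
have pE : p = nth 0 E (q - 1) by rewrite nth_take.
have [A_ge M_le] := sorted_pivot geq_trans geq_refl ev_sorted kE.
rewrite -pE in A_ge M_le; set M := drop (q - 1) E in M_le.
set A := take (q - 1) E.
have sA : size A = q - 1 by rewrite size_takel // ltnW.
have sOM : size O + size M = q - 1 by rewrite !size_drop size_takel // sb; lia.
have bE : b = A ++ M ++ O by rewrite catA !cat_take_drop.
have takek : take (q - 1) b = A by rewrite bE take_size_cat.
have dropk : drop (q - 1) b = M ++ O by rewrite bE drop_size_cat.
have pM : p \in M by rewrite pE -[q - 1]addn0 -nth_drop mem_nth // size_drop subn_gt0.
have p_even : odd p = false by apply/negbTE/(allP ev)/(mem_drop pM).
have O_par : all (fun x => odd x != odd p) O.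
  by apply: sub_all od => x ->; rewrite p_even.
have A_par : all (fun y => (p <= y) && (odd y == odd p)) A.
  apply/allP => y yA; rewrite p_even (negbTE (allP (all_take _ ev) y yA)) andbT.
  by apply: (allP (all_take (q - 1) A_ge)); rewrite take_takel.
rewrite mu_highE; last by rewrite sb -addnn leq_addr.
rewrite -/p takek dropk map_cat (map_clamp_low M_le).
apply: (lowering_maximal2 (X := O) (T := M) (Y := A) q1 ds bmax p0) => //.
- by rewrite bE perm_rev3.
- exact: perm_rev3.
apply: ordered_cat.
- exact: all_take _ ev.
- exact: take_sorted _ ev_sorted.
- rewrite all_cat all_nseq odd_pred // p_even orbT /=.
  by apply: sub_all (clamp_parity_all p0 O_par) => x; rewrite p_even; case: (odd x).
- apply: sorted_cat_nat leq_trans (sorted_nseq _ _ leqnn) _ _.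
    exact: homo_sorted (@clamp_mono p) _ od_sorted.
  by apply/allP => _ /nseqP[-> _]; apply/allP => _ /mapP[x _ ->]; apply: clamp_ge.
Qed.

(* Case (iii) with pivot [b_q = 0]: all even entries from position [q] on are
   zeros, [mu_high q b = b], and [|b|_2] omits the surplus zeros; the part
   [norm2_part q b] is then a reference tuple with pivot [0]. *)
Lemma case_high_zero q n b : 1 < q -> 3 * (q - 1) <= digsum q n ->
  maximal1 q n b -> ordered b -> q - 1 < nb_even b -> nth 0 b (q - 1) = 0 ->
  maximal2 q n (mu_high q b).
Proof.
move=> q1 ds bmax ob ek p0; have [Mb _] := bmax; have /andP[/eqP sb nb] := Mb.
have [eb ev ev_sorted od od_sorted] := ordered_split ob.
set e := nb_even b in eb ek ev ev_sorted od od_sorted.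
set E := take e b in ev ev_sorted; set O := drop e b in od od_sorted.
have kE : q - 1 < size E by rewrite size_takel.
have [_ Z_le] := sorted_pivot geq_trans geq_refl ev_sorted kE.
rewrite nth_take // p0 in Z_le; set Z := drop (q - 1) E in Z_le.
set A := take (q - 1) E.
have sA : size A = q - 1 by rewrite size_takel // ltnW.
have bE : b = A ++ Z ++ O by rewrite catA !cat_take_drop.
have -> : mu_high q b = b.
  by rewrite mu_highE ?p0 ?map_clamp0 ?cat_take_drop // sb -addnn leq_addr.
set K := norm2_part q b.
have KE : K = A ++ O.
  rewrite /K /norm2_part -/e (minn_idPr (ltnW ek)) (maxn_idPr (ltnW ek)).
  by rewrite /A /E take_takel // ltnW.
have zb : 0 \in b by rewrite -p0 mem_nth // sb; lia.
have [b_top _] := maximal1_digits q1 ds bmax zb.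
have K_lt : all (fun x => x < n.+1) K.
  have [_ _ _ Kb] := norm2_part_spec ob sb.
  by apply/allP => x /Kb /(entry_lt q1 nb).
have K_top l : 0 < l -> l < n.+1 -> count_mem l K = digit q n l.
  move=> l_pos lN; rewrite -b_top // KE [in RHS]bE !count_cat [count _ Z]count_none //.
  by apply: sub_all Z_le => x /=; rewrite leqn0 => /eqP ->; apply/eqP; lia.
have K_same : count (fun x => odd x == odd 0) K = q - 1.
  rewrite KE count_cat count_all_size ?sA ?count_none ?addn0 //.
    by apply: sub_all od => x /= ->.
  by apply: sub_all (all_take _ ev) => x /= /negPf ->.
split=> // g og Mg; rewrite [norm2 q b]norm2E -/K.
by apply: (K_dominates_norm2 q1 K_lt K_top K_same _ _ og Mg) => //; apply/allP.
Qed.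

Theorem propositionA2 (q n : nat) (b : seq nat) :
  2 <= q -> 0 < n -> (q - 1) %| n -> 3 * (q - 1) <= digsum q n ->
  M2 q n b -> ordered b -> maximal1 q n b ->
  [/\ nb_even b = q - 1 -> norm1 q b = norm2 q b /\ maximal2 q n b,
      nb_even b < q - 1 -> maximal2 q n (mu_low q b) &
      q - 1 < nb_even b -> maximal2 q n (mu_high q b)].
Proof.
move=> q1 _ _ ds _ ob bmax; split.
- exact: case_balanced.
- exact: case_low.
- move=> ek; case: (posnP (nth 0 b (q - 1))) => [p0|p0].
    exact: case_high_zero.
  exact: case_high.
Qed.
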